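(* Let $n\ge3$, $k\ge0$, let $R$ be a maximal reversible set in $G_n^k$ which is not a canonical reversible set, and let $x_1,\dots,x_{k+1}$ be a consistent labeling of $A(R)$. Let $i$ be the least positive integer with $|B(x_i,R)|\neq k+2-i$. Then: (1) $2\le i\le k-n+2$; (2) $|B(x_i,R)|=k+4-i-n$; (3) for every $j\in\{i+1,\dots,k+1\}$, $|B(x_j,R)|\le k+3-i-n$.
   Context: For integers $n\ge3$, $k\ge0$, the crown $S_n^k$ is the poset with ground set $A\cup B$, $A=\{a_1,\dots,a_{n+k}\}$, $B=\{b_1,\dots,b_{n+k}\}$, indices cyclic modulo $n+k$; elements of $A$ are pairwise incomparable, as are elements of $B$, and $a_i$ is incomparable to $b_j$ when $j\in\{i,\dots,i+k\}$ (mod $n+k$), while $a_i<b_j$ otherwise. $\mathrm{Inc}(A,B)$ is the set of pairs $(a,b)\in A\times B$ with $a$ incomparable to $b$; $G_n^k$ has vertex set $\mathrm{Inc}(A,B)$, with $(a,b)$ adjacent to $(x,y)$ iff $a<y$ and $x<b$. A set $R\subseteq\mathrm{Inc}(A,B)$ is reversible if some linear extension $L$ of $S_n^k$ has $b<a$ in $L$ for all $(a,b)\in R$; maximal reversible means maximal under inclusion among reversible sets. For $R\subseteq\mathrm{Inc}(A,B)$ and $a\in A$, $B(a,R)=\{b:(a,b)\in R\}$ and $A(R)=\{a: B(a,R)\ne\emptyset\}$. For maximal reversible $R$, $|A(R)|=k+1$ and the sets $B(a,R)$ form a chain under inclusion; a consistent labeling of $A(R)$ is a labeling $A(R)=\{x_1,\dots,x_{k+1}\}$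 with $B(x_\beta,R)\subseteq B(x_\alpha,R)$ whenever $\alpha<\beta$. A subset of $A$ is contiguous if it is a block of cyclically consecutive elements; a sequence $\sigma=(x_1,\dots,x_r)$ of distinct elements of $A$ is $h$-contiguous if each $\{x_1,\dots,x_i\}$ is contiguous. $T(\sigma)$ contains every $(x_1,b)\in\mathrm{Inc}(A,B)$, and for $1\le i<r$ contains $(x_{i+1},b)$ iff $(x_{i+1},b)\in\mathrm{Inc}(A,B)$ and $(x_i,b)\in T(\sigma)$. A canonical reversible set is $T(\sigma)$ for an $h$-contiguous $\sigma$ of length $k+1$. *)

From mathcomp Require Import all_boot.
Set Implicit Arguments. Unset Strict Implicit. Unset Printing Implicit Defensive.

(* Crown S_n^k: indices in 'I_(n+k); a_i is encoded by i (side A), b_j by j (side B).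
   Ground set of the poset: 'I_(n+k) + 'I_(n+k)  (inl i = a_i, inr j = b_j). *)
Section Crown.
Variables n k : nat.
Local Notation N := (n + k).
Local Notation I := ('I_N).

Definition inc (a b : I) : bool := ((b + N - a) %% N <= k).

Definition crown_lt (x y : I + I) : bool :=
  match x, y with
  | inl a, inr b => ~~ inc a b
  | _, _ => false
  end.

Definition linext (f : I + I -> nat) : Prop :=
  injective f /\ forall x y, crown_lt x y -> f x < f y.

Definition Inc : {set I * I} := [set p | inc p.1 p.2].

Definition reversible (R : {set I * I}) : Prop :=
  R \subset Inc /\
  exists f, linext f /\ forall p, p \in R -> f (inr p.2) < f (inl p.1).

Definition max_reversible (R : {set I * I}) : Prop :=
  reversible R /\ forall R', reversible R' -> R \subset R' -> R' = R.

Definition Bof (a : I) (R : {set I * I}) : {set I} := [set b | (a, b) \in R].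
Definition Aof (R : {set I * I}) : {set I} := [set a | Bof a R != set0].

(* consistent labeling x_1..x_{k+1}, x_t is x (t-1) *)
Definition consistent_labeling (R : {set I * I}) (x : 'I_k.+1 -> I) : Prop :=
  injective x /\ [set x t | t in 'I_k.+1] = Aof R /\
  forall al be : 'I_k.+1, al < be -> Bof (x be) R \subset Bof (x al) R.

Definition contiguous (S : {set I}) : Prop :=
  exists (s : I) (l : nat), l <= N /\
    S = [set a : I | [exists t : 'I_N, (t < l) && (val a == (s + t) %% N)]].

Definition h_contiguous (sigma : seq I) : Prop :=
  uniq sigma /\
  forall i, 1 <= i <= size sigma -> contiguous [set a in take i sigma].

(* T(sigma): Bprev is the set of b with (previous element, b) in T *)
Fixpoint Trec (Bprev : {set I}) (s : seq I) : {set I * I} :=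
  match s with
  | [::] => set0
  | a :: s' =>
      let Ba := [set b in Bprev | inc a b] in
      [set p | (p.1 == a) && (p.2 \in Ba)] :|: Trec Ba s'
  end.

Definition Tsig (sigma : seq I) : {set I * I} := Trec setT sigma.

Definition canonical (R : {set I * I}) : Prop :=
  exists sigma, size sigma = k.+1 /\ h_contiguous sigma /\ R = Tsig sigma.

End Crown.

From mathcomp Require Import all_boot zify.
Set Implicit Arguments. Unset Strict Implicit. Unset Printing Implicit Defensive.

(* Only the order h in which a linear extension puts A matters: the pairs it can
   reverse form [revset h], where B(a) consists of the b incomparable to a and
   to everything above it.  Hence a maximal reversible set is [revset h] for an
   h that cannot be modified so as to reverse more pairs, and |B(x_t)| is the
   number of b incomparable to all of the t highest elements of A.  While these
   numbers are k+2-t, the t highest elements form a cyclic arc; if this went on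
   up to t = k+1, the k+1 highest elements would form an h-contiguous sequence
   whose canonical set is R.  At the first defect i, the i-th highest element y
   sits at cyclic offset e from the arc of the i-1 highest ones, and
   i-1 < e < n+k-1.  If e < i+n-2 or e > k, moving a block of elements of A to
   just above y reverses one more pair, contradicting maximality; what remains,
   i+n-2 <= e <= k, yields |B(x_i)| = k+4-i-n, and the count drops strictly at
   the next step. *)

Ltac case_ifs :=
  repeat match goal with
  | H : context [if _ then _ else _] |- _ => move: H
  | |- context [if _ then _ else _] => case: ifP => ?
  end; intros.

Lemma card_set_ord M (P : pred nat) : #|[set j : 'I_M | P j]| = count P (iota 0 M).
Proof.
rewrite cardE /enum_mem size_filter -enumT -val_enum_ord count_map.
by apply: eq_count => j; rewrite /= inE.
Qed.

Lemma count_iota_itv lo hi M : count (fun j => lo <= j < hi) (iota 0 M) = minn M hi - lo.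
Proof.
elim: M => [|M IH]; first by rewrite min0n.
rewrite -addn1 iotaD count_cat IH /= add0n addn0.
by case: (boolP (lo <= M < hi)) => /= H; lia.
Qed.

Lemma card_ord_ltn M t : #|[set j : 'I_M | j < t]| = minn M t.
Proof. by rewrite (card_set_ord _ (fun j => 0 <= j < t)) count_iota_itv subn0. Qed.

Lemma eq_edivn d q q' r r' : r < d -> r' < d -> q * d + r = q' * d + r' -> q = q' /\ r = r'.
Proof. by move=> rd r'd E; have := edivn_eq q rd; rewrite E edivn_eq // => -[]. Qed.

Lemma antitone_leq_card M (g : 'I_M -> nat) : {homo g : i j /~ i <= j} ->
  forall v i, (v <= g i) = (i < #|[set j | v <= g j]|).
Proof.
move=> g_anti v i; have iM := ltn_ord i; apply/idP/idP => [vi|].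
- have : [set j : 'I_M | j < i.+1] \subset [set j | v <= g j].
    by apply/subsetP => j; rewrite !inE ltnS => /g_anti; apply: leq_trans.
  by move/subset_leq_card; rewrite card_ord_ltn; lia.
- apply: contraTT; rewrite -ltnNge => gi.
  have : [set j | v <= g j] \subset [set j : 'I_M | j < i].
    apply/subsetP => j; rewrite !inE; apply: contraTT; rewrite -leqNgt -ltnNge.
    by move=> /g_anti gji; apply: leq_ltn_trans gji gi.
  by move/subset_leq_card; rewrite card_ord_ltn; lia.
Qed.

Section CyclicDistance.
Variable N : nat.

Definition cdist (x y : nat) := (y + N - x) %% N.

Lemma cdistE x y : x < N -> y < N -> cdist x y = if x <= y then y - x else y + N - x.
Proof.
move=> xN yN; rewrite /cdist; case: ifP => xy; last by rewrite modn_small; lia.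
by rewrite -addnBAC // modnDr modn_small; lia.
Qed.

Lemma cdist_lt x y : x < N -> cdist x y < N.
Proof. by move=> xN; apply: ltn_pmod; lia. Qed.

Lemma cdistnn x : x < N -> cdist x x = 0.
Proof. by move=> xN; rewrite cdistE // leqnn subnn. Qed.

Lemma cdist_inj u x y : u < N -> x < N -> y < N -> cdist u x = cdist u y -> x = y.
Proof. by move=> uN xN yN; rewrite !cdistE //; case_ifs; lia. Qed.

Lemma cdist_cdist u x y : u < N -> x < N -> y < N ->
  cdist (cdist u x) (cdist u y) = cdist x y.
Proof.
move=> uN xN yN; rewrite (cdistE (cdist_lt _ uN) (cdist_lt _ uN)) !cdistE //.
by case_ifs; lia.
Qed.

Lemma cdist_addr u d : u < N -> d < N -> cdist u ((u + d) %% N) = d.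
Proof.
move=> uN dN; rewrite (cdistE uN (ltn_pmod _ _)); last lia.
case: (ltnP (u + d) N) => udN; first by rewrite modn_small //; case_ifs; lia.
rewrite -(subnK udN) modnDr modn_small; last lia.
by case_ifs; lia.
Qed.

End CyclicDistance.

Section Crown.
Variables n k : nat.
Hypothesis n_ge3 : 3 <= n.
Local Notation N := (n + k).
Local Notation I := 'I_N.
Local Notation cd := (cdist N).
Implicit Types (u a b y : I) (S : {set I}).

Lemma N_gt0 : 0 < N. Proof. lia. Qed.

Lemma cdist_ord_inj u : injective (fun a : I => cd u a).
Proof. by move=> a b /(cdist_inj (ltn_ord u) (ltn_ord a) (ltn_ord b)) /val_inj. Qed.

Definition cshift u (d : nat) : I := Ordinal (ltn_pmod (u + d) N_gt0).

Lemma cdist_cshift u d : d < N -> cd u (cshift u d) = d.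
Proof. exact: cdist_addr. Qed.

Lemma cshift_cdist u a : cshift u (cd u a) = a.
Proof. by apply: (@cdist_ord_inj u); rewrite cdist_cshift ?cdist_lt. Qed.

Lemma inc_cdist u a b : inc a b =
  if cd u a <= cd u b then cd u b - cd u a <= k else cd u b + n <= cd u a.
Proof.
rewrite /inc -[X in X <= k]/(cd a b) -(cdist_cdist (ltn_ord u)) //.
by rewrite cdistE ?cdist_lt //; case_ifs; lia.
Qed.

Lemma card_cdist u (P : pred nat) : #|[set b : I | P (cd u b)]| = count P (iota 0 N).
Proof.
pose dist_ord (b : I) : I := Ordinal (cdist_lt b (ltn_ord u)).
have -> : [set b : I | P (cd u b)] = dist_ord @^-1: [set j : I | P j].
  by apply/setP => b; rewrite !inE.
by rewrite card_preimset ?card_set_ord // => a b [] /cdist_ord_inj.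
Qed.

Definition Bcommon S : {set I} := [set b : I | [forall a in S, inc a b]].

Definition arc u (m : nat) : {set I} := [set a : I | cd u a < m].

Lemma Bcommon_anti S S' : S \subset S' -> Bcommon S' \subset Bcommon S.
Proof.
move=> /subsetP SS'; apply/subsetP => b; rewrite !inE => /forall_inP S'b.
by apply/forall_inP => a /SS'; apply: S'b.
Qed.

Lemma Bcommon_setU1 S y : Bcommon (S :|: [set y]) = Bcommon S :&: [set b | inc y b].
Proof.
apply/setP => b; rewrite !inE; apply/forall_inP/andP => [Sb|[/forall_inP Sb yb] a].
- split; last by apply: Sb; rewrite !inE eqxx orbT.
  by apply/forall_inP => a Sa; apply: Sb; rewrite inE Sa.
- by rewrite !inE => /orP [/Sb //|/eqP ->].
Qed.

Lemma mem_Bcommon_arc u m b : 1 <= m <= N -> (b \in Bcommon (arc u m)) = (m.-1 <= cd u b <= k).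
Proof.
move=> m_itv; rewrite inE; have bN := cdist_lt b (ltn_ord u).
apply/forall_inP/idP => [arc_b|b_itv a]; last by rewrite inE (inc_cdist u) => ?; case_ifs; lia.
have inc_at d : d < m -> if d <= cd u b then cd u b - d <= k else cd u b + n <= d.
  move=> dm; have := arc_b (cshift u d); rewrite inE (inc_cdist u) cdist_cshift; last lia.
  by apply; lia.
have bk : cd u b <= k by have := inc_at 0; rewrite leq0n subn0; apply; lia.
by move: (inc_at (cd u b).+1); rewrite ltnn; lia.
Qed.

Lemma mem_Bcommon_arcU1 u m y b : 1 <= m <= N -> m <= cd u y ->
  (b \in Bcommon (arc u m :|: [set y])) =
  (m.-1 <= cd u b <= k) && ((cd u y <= cd u b) || (cd u b + n <= cd u y)).
Proof.
move=> m_itv my; rewrite Bcommon_setU1 in_setI mem_Bcommon_arc // inE (inc_cdist u).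
by have := cdist_lt b (ltn_ord u); have := cdist_lt y (ltn_ord u); case_ifs; lia.
Qed.

Lemma card_Bcommon_arc u m : 1 <= m <= N -> #|Bcommon (arc u m)| = k.+2 - m.
Proof.
move=> m_itv; have -> : Bcommon (arc u m) = [set b : I | m.-1 <= cd u b < k.+1].
  by apply/setP => b; rewrite mem_Bcommon_arc // inE ltnS.
by rewrite (card_cdist u (fun j => m.-1 <= j < k.+1)) count_iota_itv; lia.
Qed.

Lemma card_Bcommon_arcU1 u m y : 1 <= m <= N -> m <= cd u y ->
  #|Bcommon (arc u m :|: [set y])| = (k.+1 - cd u y) + (minn N ((cd u y).+1 - n) - m.-1).
Proof.
move=> m_itv my; set e := cd u y; have eN : e < N := cdist_lt y (ltn_ord u).
pose P1 j := e <= j < k.+1; pose P2 j := m.-1 <= j < e.+1 - n.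
have -> : Bcommon (arc u m :|: [set y]) = [set b : I | predU P1 P2 (cd u b)].
  apply/setP => b; rewrite mem_Bcommon_arcU1 // inE /P1 /P2 /=.
  by have := cdist_lt b (ltn_ord u); lia.
have disjoint12 : count (predI P1 P2) (iota 0 N) = 0.
  by rewrite (eq_count (a2 := pred0)) ?count_pred0 // => j; rewrite /P1 /P2 /=; lia.
have := count_predUI P1 P2 (iota 0 N); rewrite disjoint12 addn0 !count_iota_itv.
by rewrite (card_cdist u (predU P1 P2)) => ->; lia.
Qed.

Lemma arc1 u : arc u 1 = [set u].
Proof.
apply/setP => a; rewrite !inE ltnS leqn0; apply/eqP/eqP => [ua|->]; last exact: cdistnn.
by apply: (@cdist_ord_inj u); rewrite ua cdistnn.
Qed.

Lemma arcS u m y : cd u y = m -> arc u m :|: [set y] = arc u m.+1.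
Proof.
move=> uy; apply/setP => a; rewrite !inE -uy ltnS (leq_eqVlt (cd u a)) orbC.
by congr (_ || _); apply/eqP/eqP => [->|/cdist_ord_inj].
Qed.

Lemma arc_wrap u m y : m < N -> cd u y = N.-1 -> arc u m :|: [set y] = arc y m.+1.
Proof.
move=> mN uy; apply/setP => a.
rewrite !inE -(cdist_cdist (ltn_ord u) (ltn_ord y) (ltn_ord a)) uy.
case: (eqVneq a y) => [->|ay]; first by rewrite uy orbT cdistnn //; lia.
have ua : cd u a != N.-1 by apply: contra_neq ay; rewrite -uy => /cdist_ord_inj.
have uaN := cdist_lt a (ltn_ord u).
by rewrite orbF [cd N.-1 _]cdistE //; case_ifs; lia.
Qed.

Lemma arc_contiguous u t : t <= N -> contiguous (arc u t).
Proof.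
move=> tN; exists u, t; split => //; apply/setP => a; rewrite !inE.
apply/idP/existsP => [ua|[d /andP [dt /eqP aE]]].
  exists (Ordinal (cdist_lt a (ltn_ord u))); rewrite ua; apply/eqP.
  by have /(congr1 val) <- := cshift_cdist u a.
have -> : a = cshift u d by apply: val_inj.
by rewrite cdist_cshift.
Qed.

Lemma mem_Trec Bp s a b : (a, b) \in Trec Bp s <->
  b \in Bp /\ exists t, [/\ t < size s, nth a s t = a & all (fun c => inc c b) (take t.+1 s)].
Proof.
elim: s Bp => [|c s IH] Bp /=; first by rewrite inE; split => // -[_ [t []]].
rewrite in_setU !inE /=; split.
- case/orP => [/andP [/eqP -> /andP [bBp cb]]|/IH [] /[!inE] /andP [bBp cb] [t [ts sta all_b]]].
    by split => //; exists 0; rewrite take0 /= cb.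
  by split => //; exists t.+1; rewrite /= cb.
- move=> [bBp [[|t] [/= ts sta /andP [cb all_b]]]]; first by rewrite -sta eqxx bBp cb.
  by apply/orP; right; apply/IH; split; [rewrite inE bBp cb | exists t].
Qed.

(* [(a, b) \in revset h] iff [b] ends up below [a] in the linear extension that
   orders A by [h] and puts each [b] directly above the highest element of A
   it has to exceed. *)
Definition revset (h : I -> nat) : {set I * I} :=
  [set p | [forall a, (h p.1 <= h a) ==> inc a p.2]].

Lemma revset_reversible h : injective h -> reversible (revset h).
Proof.
move=> h_inj; split.
  by apply/subsetP => p; rewrite !inE => /forallP /(_ p.1); rewrite leqnn.
pose floor b := \max_(a | ~~ inc a b) (h a).+1.
pose hi z := match z with inl a => (h a).+1 | inr b => floor b end.
pose lo (z : I + I) := if z is inr b then (val b).+1 else 0.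
have lo_lt z : lo z < N.+1 by case: z => //= b; rewrite ltnS.
exists (fun z => hi z * N.+1 + lo z); split; first split.
- move=> z z' /(eq_edivn (lo_lt z) (lo_lt z')).
  case: z z' => [a|b] [a'|b'] /= [] //.
  + by move=> /succn_inj /h_inj ->.
  + by move=> _ [] /val_inj ->.
- case=> [a|b] [a'|b'] //= ab'.
  have : (h a).+1 <= floor b' by apply: leq_bigmax_cond.
  nia.
- case=> a b; rewrite inE /= => /forallP ab.
  have : floor b <= h a.
    apply/bigmax_leqP => a' /negbTE a'b; rewrite ltnNge; apply/negP => aa'.
    by have := ab a'; rewrite aa' a'b.
  by have := ltn_ord b; nia.
Qed.

Lemma reversible_sub_revset R : reversible R -> exists2 h, injective h & R \subset revset h.
Proof.
move=> [_ [f [[f_inj f_ext] f_rev]]]; exists (fun a => f (inl a)).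
  by move=> a a' /f_inj [].
apply/subsetP => -[a b] ab; rewrite inE; apply/forallP => a' /=; apply/implyP => aa'.
apply: contraLR aa' => a'b; rewrite -ltnNge.
exact: ltn_trans (f_ext (inl a') (inr b) a'b) (f_rev _ ab).
Qed.

Definition revset_maximal h :=
  forall h', injective h' -> revset h \subset revset h' -> revset h' = revset h.

Lemma max_reversible_revset R : max_reversible R ->
  exists h, [/\ injective h, R = revset h & revset_maximal h].
Proof.
move=> [R_rev R_max]; have [h h_inj Rh] := reversible_sub_revset R_rev.
have hR := R_max _ (revset_reversible h_inj) Rh.
exists h; split => [//||h' h'_inj]; rewrite hR // => hh'.
exact: R_max _ (revset_reversible h'_inj) hh'.
Qed.

Section Ranks.
Variable h : I -> nat.
Hypothesis h_inj : injective h.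

Definition rank a := #|[set a' | h a < h a']|.

Lemma rank_leq a a' : (rank a' <= rank a) = (h a <= h a').
Proof.
case: (leqP (h a) (h a')) => aa'.
  by apply: subset_leq_card; apply/subsetP => z; rewrite !inE; apply: leq_trans.
apply/negbTE; rewrite -ltnNge; apply: proper_card; apply/properP; split.
  by apply/subsetP => z; rewrite !inE; apply: ltn_trans.
by exists a; rewrite !inE ?ltnn.
Qed.

Lemma rank_lt a : rank a < N.
Proof.
apply: (@leq_ltn_trans #|[set~ a]|); last by rewrite cardsC1 card_ord; lia.
by apply: subset_leq_card; apply/subsetP => z; rewrite !inE; apply: contraTneq => ->; rewrite ltnn.
Qed.

Lemma rank_inj : injective rank.
Proof. by move=> a a' aa'; apply: h_inj; apply/eqP; rewrite eqn_leq -!rank_leq aa' leqnn. Qed.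

Definition rank_ord a : I := Ordinal (rank_lt a).

Lemma rank_ord_inj : injective rank_ord.
Proof. by move=> a a' /(congr1 val) /rank_inj. Qed.

Definition at_rank (j : nat) : I := odflt (Ordinal N_gt0) [pick a | rank a == j].

Lemma rank_at j : j < N -> rank (at_rank j) = j.
Proof.
move=> jN; rewrite /at_rank; case: pickP => [a /eqP //|no_a].
have := no_a (invF rank_ord_inj (Ordinal jN)).
by rewrite -[rank _]/(val (rank_ord _)) f_invF eqxx.
Qed.

Lemma rankK : cancel rank at_rank.
Proof. by move=> a; apply: rank_inj; rewrite rank_at ?rank_lt. Qed.

Definition top t := [set a | rank a < t].

Lemma top_subset t t' : t <= t' -> top t \subset top t'.
Proof. by move=> tt'; apply/subsetP => a; rewrite !inE => /leq_trans; apply. Qed.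

Lemma topS t : t < N -> top t.+1 = top t :|: [set at_rank t].
Proof.
move=> tN; apply/setP => a; rewrite !inE ltnS leq_eqVlt orbC; congr (_ || _).
by apply/eqP/eqP => [<-|->]; rewrite ?rankK ?rank_at //; lia.
Qed.

Lemma top1 : top 1 = arc (at_rank 0) 1.
Proof.
rewrite arc1; apply/setP => a; rewrite !inE ltnS leqn0.
by apply/eqP/eqP => [<-|->]; rewrite ?rankK ?rank_at //; lia.
Qed.

Lemma Bof_revset a : Bof a (revset h) = Bcommon (top (rank a).+1).
Proof.
apply/setP => b; rewrite !inE; apply/forallP/forall_inP => [ab a' | ab a'].
  by rewrite inE ltnS rank_leq; apply/implyP/ab.
by apply/implyP; rewrite -rank_leq -ltnS => a'a; apply: ab; rewrite inE.
Qed.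

Definition bsize t := #|Bcommon (top t)|.

Lemma bsize_anti t t' : t <= t' -> bsize t' <= bsize t.
Proof. by move=> tt'; apply/subset_leq_card/Bcommon_anti/top_subset. Qed.

Lemma next_beyond_arc u m : m < N -> top m = arc u m -> m <= cd u (at_rank m).
Proof.
move=> mN top_m; have : at_rank m \notin top m by rewrite inE rank_at // ltnn.
by rewrite top_m inE -leqNgt.
Qed.

Lemma bsize_next u m : 1 <= m < N -> top m = arc u m ->
  bsize m.+1 = (k.+1 - cd u (at_rank m)) + (minn N ((cd u (at_rank m)).+1 - n) - m.-1).
Proof.
move=> m_itv top_m; rewrite /bsize topS; last lia.
by rewrite top_m card_Bcommon_arcU1 ?next_beyond_arc //; lia.
Qed.

Lemma top_arc t : 1 <= t <= k.+1 -> (forall j, 1 <= j <= t -> bsize j = k.+2 - j) ->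
  exists u, top t = arc u t.
Proof.
elim: t => [//|t IH] t_itv bsizeE.
have [->|t_gt0] := posnP t; first by exists (at_rank 0); apply: top1.
have [u top_t] := IH ltac:(lia) (fun j j_itv => bsizeE j ltac:(lia)).
have := bsizeE t.+1 ltac:(lia); rewrite (bsize_next (u := u)) //; last lia.
move=> bsize_t1; have t_le : t <= cd u (at_rank t) by apply: next_beyond_arc top_t; lia.
have lt_N := cdist_lt (at_rank t) (ltn_ord u).
have [uy|uy] : cd u (at_rank t) = t \/ cd u (at_rank t) = N.-1 by lia.
- by exists u; rewrite topS ?top_t ?(arcS uy) //; lia.
- by exists (at_rank t); rewrite topS ?top_t ?(arc_wrap _ uy) //; lia.
Qed.

Section NextElement.
Hypothesis h_max : revset_maximal h.
Variables (u : I) (m : nat).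
Hypothesis m_itv : 1 <= m <= k.
Hypothesis top_m : top m = arc u m.
Local Notation y := (at_rank m).

Lemma above_next a : (h y < h a) = (cd u a < m).
Proof.
have mN : m < N by lia.
have := erefl (a \in top m); rewrite {2}top_m !inE => <-.
by rewrite -{2}(rank_at mN) ltnNge -rank_leq -ltnNge.
Qed.

Lemma revset_below_next a b :
  (a, b) \in revset h -> h a <= h y -> b \in Bcommon (arc u m :|: [set y]).
Proof.
rewrite !inE => /forallP ab ay; apply/forall_inP => a'; rewrite !inE => a'_in.
apply: (implyP (ab a')) => /=; case/orP: a'_in => [|/eqP ->//].
by rewrite -above_next => /ltnW; apply: leq_trans.
Qed.

Section Lift.
Variables (L : pred I) (rho : I -> nat).
Hypothesis L_out : forall a, L a -> m <= cd u a.
Hypothesis rho_itv : forall a, L a -> 0 < rho a <= N.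
Hypothesis rho_inj : {in L &, injective rho}.
Hypothesis L_inc : forall b, b \in Bcommon (arc u m :|: [set y]) -> forall a, L a -> inc a b.

(* The elements of [L], ordered by [rho], are moved to just above [y]. *)
Definition lift a := if L a then h y * N.+1 + rho a else h a * N.+1.

Lemma lift_inj : injective lift.
Proof.
have rho_lt a : L a -> rho a < N.+1 by move/rho_itv; lia.
move=> a a'; rewrite /lift; case: (boolP (L a)) => La; case: (boolP (L a')) => La'.
- by move/addnI; apply: rho_inj.
- rewrite -[h a' * _]addn0 => /(eq_edivn (rho_lt _ La) (ltn0Sn _)) [_].
  by have := rho_itv La; lia.
- rewrite -[h a * _]addn0 => /esym /(eq_edivn (rho_lt _ La') (ltn0Sn _)) [_].
  by have := rho_itv La'; lia.
- by move/eqP; rewrite eqn_mul2r /= => /eqP /h_inj.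
Qed.

Lemma revset_sub_lift : revset h \subset revset lift.
Proof.
apply/subsetP => -[a b] ab; have := ab; rewrite !inE => /forallP /= ab'.
apply/forallP => a' /=; apply/implyP; rewrite /lift; case: (ltnP (h y) (h a)) => [ya|ay].
  have La : ~~ L a by apply/negP => /L_out; move: ya; rewrite above_next; lia.
  rewrite (negbTE La); case: ifP => La' aa'; last by apply: (implyP (ab' a')); nia.
  by have := rho_itv (idP La'); nia.
have b_in := revset_below_next ab ay.
case: (boolP (L a')) => [La' _|La']; first exact: L_inc b_in _ La'.
move=> aa'; apply: (implyP (ab' a')).
by case: ifP aa' => [La|_]; [have := rho_itv (idP La)|]; nia.
Qed.

Lemma mem_revset_lift a0 b0 : L a0 ->
  (forall a, L a -> rho a0 <= rho a -> inc a b0) ->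
  (forall a, cd u a < m -> inc a b0) -> (a0, b0) \in revset h.
Proof.
move=> La0 inc_L inc_arc; rewrite -(h_max lift_inj revset_sub_lift) inE.
apply/forallP => a; apply/implyP; rewrite /= /lift La0.
case: ifP => [La ha|La ha]; first by apply: inc_L => //; lia.
by apply: inc_arc; rewrite -above_next; have := rho_itv La0; nia.
Qed.

End Lift.

Local Notation e := (cd u y).

Lemma next_ge : m <= e.
Proof. by apply: next_beyond_arc top_m; lia. Qed.

Lemma below_next a : m <= cd u a -> h a <= h y.
Proof. by move=> ma; rewrite leqNgt above_next -leqNgt. Qed.

Lemma next_far : m < e -> m + n.-1 <= e.
Proof.
move=> me; rewrite leqNgt; apply/negP => e_near.
have eN := cdist_lt y (ltn_ord u); have m_le := next_ge.
pose a0 := cshift u m; have a0E : cd u a0 = m by rewrite cdist_cshift; lia.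
(* Lifting the elements between the arc and [y] would also reverse (a0, a0). *)
have : (a0, a0) \in revset h.
  apply: (mem_revset_lift (L := fun a => m <= cd u a < e) (rho := fun a => N - cd u a)).
  - by move=> a /andP [].
  - by move=> a /andP [_ ae]; lia.
  - move=> a a' _ _ /= aa'; apply: (@cdist_ord_inj u).
    by have := cdist_lt a (ltn_ord u); have := cdist_lt a' (ltn_ord u); lia.
  - move=> b; rewrite mem_Bcommon_arcU1 //; last lia.
    by move=> b_in a /andP [ma ae]; rewrite (inc_cdist u); case_ifs; lia.
  - by rewrite /= a0E; lia.
  - by move=> a /andP [ma ae]; rewrite /= a0E => ?; rewrite (inc_cdist u) a0E; case_ifs; lia.
  - by move=> a am; rewrite (inc_cdist u) a0E; case_ifs; lia.
have a0_low : h a0 <= h y by apply: below_next; rewrite a0E.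
by move/revset_below_next/(_ a0_low); rewrite mem_Bcommon_arcU1 ?a0E //; lia.
Qed.

Lemma next_le_k : e < N.-1 -> e <= k.
Proof.
move=> e_lt; rewrite leqNgt; apply/negP => ke.
have eN := cdist_lt y (ltn_ord u); have m_le := next_ge.
pose a0 := cshift u N.-1; have a0E : cd u a0 = N.-1 by rewrite cdist_cshift; lia.
pose b0 := cshift u k.-1; have b0E : cd u b0 = k.-1 by rewrite cdist_cshift; lia.
(* Lifting the elements beyond [y] would also reverse (a0, b0). *)
have : (a0, b0) \in revset h.
  apply: (mem_revset_lift (L := fun a => e < cd u a) (rho := fun a => cd u a - e)).
  - by move=> a /= ea; lia.
  - by move=> a /= ea; have := cdist_lt a (ltn_ord u); lia.
  - move=> a a' /= ea ea' aa'; apply: (@cdist_ord_inj u); lia.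
  - move=> b; rewrite mem_Bcommon_arcU1 //; last lia.
    by move=> b_in a /= ea; rewrite (inc_cdist u); have := cdist_lt a (ltn_ord u); case_ifs; lia.
  - by rewrite /= a0E.
  - move=> a /= ea; rewrite a0E => ?; have := cdist_lt a (ltn_ord u).
    by rewrite (inc_cdist u) b0E; case_ifs; lia.
  - by move=> a am; rewrite (inc_cdist u) b0E; case_ifs; lia.
have a0_low : h a0 <= h y by apply: below_next; rewrite a0E; lia.
by move/revset_below_next/(_ a0_low); rewrite mem_Bcommon_arcU1 ?b0E //; lia.
Qed.

Lemma bsize_defect : bsize m.+1 != k.+1 - m ->
  m + n.-1 <= e <= k /\ bsize m.+1 = k + 3 - n - m.
Proof.
have eN := cdist_lt y (ltn_ord u); have m_le := next_ge.
rewrite (bsize_next (u := u)) //; last lia.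
move=> defect; have me : m < e.
  rewrite ltnNge; apply: contra defect => em.
  have -> : e = m by lia.
  by apply/eqP; lia.
have e_lt : e < N.-1.
  rewrite ltnNge; apply: contra defect => em.
  have -> : e = N.-1 by lia.
  by apply/eqP; lia.
have := next_far me; have := next_le_k e_lt; lia.
Qed.

Lemma bsize_drop : m + n.-1 <= e <= k -> bsize m.+2 < bsize m.+1.
Proof.
move=> e_itv; have eN := cdist_lt y (ltn_ord u); have m_le := next_ge.
rewrite /bsize; apply: proper_card; rewrite (topS (t := m.+1)); last lia.
set z := at_rank m.+1; have zN := cdist_lt z (ltn_ord u).
have mz : m <= cd u z.
  have : z \notin top m by rewrite inE rank_at; lia.
  by rewrite top_m inE -leqNgt.
have ze : cd u z != e by apply/eqP => /cdist_ord_inj /(congr1 rank); rewrite !rank_at; lia.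
(* [cshift u beta] is incomparable to all of [top m.+1] but not to [z]. *)
pose beta := if cd u z < e then maxn m.-1 (cd u z + 1 - n) else minn k (cd u z).-1.
have betaN : beta < N by rewrite /beta; case: ifP; lia.
apply/properP; split; first by apply/Bcommon_anti/subsetP => a; rewrite !inE => ->.
exists (cshift u beta).
- rewrite topS ?top_m; last lia.
  by rewrite mem_Bcommon_arcU1 ?cdist_cshift // /beta; [case: ifP|]; lia.
- rewrite Bcommon_setU1; apply/negP => /setIP [_].
  rewrite inE (inc_cdist u) cdist_cshift //.
  by rewrite /beta; case: ifP; case_ifs; lia.
Qed.

End NextElement.

Lemma top_prefix t : t <= N -> [set a in map at_rank (iota 0 t)] = top t.
Proof.
move=> tN; apply/setP => a; rewrite !inE; apply/mapP/idP => [[j + ->]|a_top].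
  by rewrite mem_iota => /andP [_ jt]; rewrite rank_at; lia.
by exists (rank a); rewrite ?rankK // mem_iota.
Qed.

Lemma all_inc_at_rank t b : t <= N ->
  all (fun c => inc c b) (map at_rank (iota 0 t)) = (b \in Bcommon (top t)).
Proof.
move=> tN; rewrite -top_prefix // inE; apply/allP/forall_inP => [all_b a|all_b a a_in].
  by rewrite inE; apply: all_b.
by apply: all_b; rewrite inE.
Qed.

Lemma revset_Tsig : Bcommon (top k.+2) = set0 ->
  revset h = Tsig (map at_rank (iota 0 k.+1)).
Proof.
move=> top_k2; set sigma := map at_rank _.
have take_sigma t : t <= k.+1 -> take t sigma = map at_rank (iota 0 t).
  by move=> tk; rewrite -map_take take_iota; congr (map _ (iota _ _)); lia.
apply/setP => -[a b]; apply/idP/idP => [ab|/mem_Trec [_ [t [+ + all_b]]]].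
- have b_in : b \in Bcommon (top (rank a).+1) by rewrite -Bof_revset inE.
  have ak : rank a < k.+1.
    rewrite ltnNge; apply/negP => ka; move: b_in => /(subsetP (Bcommon_anti (top_subset _))).
    by move=> /(_ k.+2 ka); rewrite top_k2 inE.
  apply/mem_Trec; split; first by rewrite inE.
  exists (rank a); rewrite size_map size_iota (nth_map 0) ?size_iota // nth_iota // rankK.
  by rewrite take_sigma // all_inc_at_rank // rank_lt.
- rewrite size_map size_iota => tk; rewrite (nth_map 0) ?size_iota // nth_iota // add0n => <-.
  rewrite take_sigma // all_inc_at_rank in all_b; last lia.
  have : b \in Bof (at_rank t) (revset h) by rewrite Bof_revset rank_at //; lia.
  by rewrite inE.
Qed.

Lemma revset_canonical : (forall j, 1 <= j <= k.+1 -> bsize j = k.+2 - j) -> canonical (revset h).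
Proof.
move=> bsizeE; have top_t t : 1 <= t <= k.+1 -> exists u, top t = arc u t.
  by move=> t_itv; apply: top_arc => // j j_itv; apply: bsizeE; lia.
exists (map at_rank (iota 0 k.+1)); split; first by rewrite size_map size_iota.
split; first split.
- rewrite map_inj_in_uniq ?iota_uniq // => i j; rewrite !mem_iota => /andP [_ ik] /andP [_ jk].
  by move/(congr1 rank); rewrite !rank_at //; lia.
- move=> t; rewrite size_map size_iota => t_itv.
  rewrite -map_take take_iota top_prefix; last lia.
  by have [u ->] := top_t (minn t k.+1) ltac:(lia); apply: arc_contiguous; lia.
- apply: revset_Tsig; apply: cards0_eq; have [u top_k1] := top_t k.+1 ltac:(lia).
  rewrite -/(bsize k.+2) (bsize_next (u := u)) //; last lia.
  have := next_beyond_arc (ltac:(lia) : k.+1 < N) top_k1.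
  by have := cdist_lt (at_rank k.+1) (ltn_ord u); lia.
Qed.

Lemma exists_defect : ~ canonical (revset h) ->
  exists j, (1 <= j <= k.+1) && (bsize j != k.+2 - j).
Proof.
move=> not_canonical.
pose defective j := bsize j != k.+2 - j.
have [/hasP [j + defect]|/hasPn no_defect] := boolP (has defective (iota 1 k.+1)).
  by rewrite mem_iota => j_itv; exists j; apply/andP; split; [lia | exact: defect].
case: not_canonical; apply: revset_canonical => j j_itv; apply/eqP.
by have := no_defect j; rewrite mem_iota negbK; apply; lia.
Qed.

Section Labeling.
Variable x : 'I_k.+1 -> I.
Hypothesis x_lab : consistent_labeling (revset h) x.

Lemma card_geq_rank v : #|[set j : I | v <= bsize j.+1]| = #|[set a | v <= #|Bof a (revset h)|]|.
Proof.
have -> : [set a | v <= #|Bof a (revset h)|] = rank_ord @^-1: [set j : I | v <= bsize j.+1].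
  by apply/setP => a; rewrite !inE Bof_revset.
by rewrite card_preimset //; apply: rank_ord_inj.
Qed.

Lemma card_geq_labeling v : 0 < v ->
  #|[set t : 'I_k.+1 | v <= #|Bof (x t) (revset h)|]| = #|[set a | v <= #|Bof a (revset h)|]|.
Proof.
have [x_inj [x_im _]] := x_lab; move=> v_gt0.
have -> : [set a | v <= #|Bof a (revset h)|] = x @: [set t | v <= #|Bof (x t) (revset h)|].
  apply/setP => a; rewrite inE; apply/idP/imsetP => [va|[t + ->]]; last by rewrite inE.
  have : a \in Aof (revset h) by rewrite inE; apply/set0Pn/card_gt0P; lia.
  by rewrite -x_im => /imsetP [t _ a_xt]; exists t; rewrite // inE -a_xt.
by rewrite card_imset.
Qed.

(* Both sides are antitone in [t] and have level sets of the same sizes. *)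
Lemma card_Bof_labeling (t : 'I_k.+1) : #|Bof (x t) (revset h)| = bsize t.+1.
Proof.
have [_ [_ x_chain]] := x_lab.
have card_Bof_anti : {homo (fun t => #|Bof (x t) (revset h)|) : t t' /~ t <= t'}.
  move=> t1 t2; rewrite leq_eqVlt => /orP [/eqP/val_inj ->//|t12].
  exact/subset_leq_card/x_chain.
have bsize_succ_anti : {homo (fun j : I => bsize j.+1) : j j' /~ j <= j'}.
  by move=> j j' jj'; apply: bsize_anti.
have kN : k.+1 <= N by lia.
suff sameE v : (v <= #|Bof (x t) (revset h)|) = (v <= bsize (widen_ord kN t).+1).
  by apply/eqP; rewrite eqn_leq -sameE leqnn sameE leqnn.
case: v => [//|v].
rewrite (antitone_leq_card card_Bof_anti) (antitone_leq_card bsize_succ_anti).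
by rewrite card_geq_labeling // card_geq_rank.
Qed.

End Labeling.

Lemma first_defect : revset_maximal h -> ~ canonical (revset h) ->
  exists i, [/\ 2 <= i <= k.+1, forall j, 1 <= j < i -> bsize j = k.+2 - j,
    i + n <= k + 2, bsize i + i + n = k + 4 &
    forall j, i < j -> bsize j + i + n <= k + 3].
Proof.
move=> h_max /exists_defect ex_defect.
have [i /andP [i_itv defect] i_min] := ex_minnP ex_defect.
have before j : 1 <= j < i -> bsize j = k.+2 - j.
  move=> j_itv; apply/eqP/negPn/negP => j_def.
  by have := i_min j; rewrite j_def andbT; lia.
have bsize1 : bsize 1 = k.+1 by rewrite /bsize top1 card_Bcommon_arc //; lia.
have i_ge2 : 2 <= i.
  rewrite ltnNge; apply: contra defect => i_le1; have -> : i = 1 by lia.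
  by rewrite bsize1; apply/eqP; lia.
set m := i.-1; have m_itv : 1 <= m <= k by lia.
have mi : m.+1 = i by lia.
have [u top_m] : exists u, top m = arc u m.
  by apply: top_arc => [|j j_itv]; [lia | apply: before; lia].
have defect_m : bsize m.+1 != k.+1 - m by rewrite mi; move: defect; lia.
have [e_itv bsize_i] := bsize_defect h_max m_itv top_m defect_m.
have drop := bsize_drop m_itv top_m e_itv.
rewrite mi in bsize_i drop; exists i; split => //; try lia.
by move=> j ij; have := bsize_anti ij; lia.
Qed.

End Ranks.
End Crown.

Theorem lemma3p2 (n k : nat) (R : {set 'I_(n + k) * 'I_(n + k)})
  (x : 'I_k.+1 -> 'I_(n + k)) :
  3 <= n ->
  max_reversible R ->
  ~ canonical R ->
  consistent_labeling R x ->
  let xl := fun i : nat => x (inord i.-1) in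
  exists i : nat,
    (1 <= i <= k.+1) /\
    #|Bof (xl i) R| != k + 2 - i /\
    (forall j, 1 <= j < i -> #|Bof (xl j) R| = k + 2 - j) /\
    (2 <= i /\ i + n <= k + 2) /\
    #|Bof (xl i) R| + i + n = k + 4 /\
    (forall j, i + 1 <= j <= k + 1 -> #|Bof (xl j) R| + i + n <= k + 3).
Proof.
move=> n_ge3 /(max_reversible_revset n_ge3) [h [h_inj -> h_max]] not_canonical x_lab xl.
have Bof_xl j : 1 <= j <= k.+1 -> #|Bof (xl j) (revset h)| = bsize h j.
  by move=> j_itv; rewrite card_Bof_labeling // inordK; [congr bsize; lia | lia].
have [i [i_itv before i_n bsize_i after]] := first_defect n_ge3 h_inj h_max not_canonical.
exists i; rewrite Bof_xl; last lia.
do ![split]; try lia.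
- by move=> j j_itv; rewrite Bof_xl; [have := before j | ]; lia.
- by move=> j j_itv; rewrite Bof_xl; [have := after j | ]; lia.
Qed.
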